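(* If $|D|\ge 2n^2$, then at least a fraction $1/e$ of all inputs in $(D\times D)^n$ belong to $EB^{-1}(1)$.
   Context: $D$ is a finite domain. Two elements $x=(x_1,x_2)$ and $y=(y_1,y_2)$ of $D\times D$ are bidistinct if $x_1\ne y_2$ and $x_2\ne y_1$. The element bidistinctness function $EB:(D\times D)^n\to\{0,1\}$ equals $1$ iff for every pair of indices $1\le i,j\le n$ the $i$-th and $j$-th pairs of the input are bidistinct. *)

From mathcomp Require Import all_boot all_order all_algebra.
From mathcomp Require Import all_classical all_reals all_analysis.
Set Implicit Arguments. Unset Strict Implicit. Unset Printing Implicit Defensive.

Definition bidistinct (D : finType) (x y : D * D) : bool :=
  (x.1 != y.2) && (x.2 != y.1).

Definition EB (D : finType) (n : nat) (z : {ffun 'I_n -> D * D}) : bool :=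
  [forall i : 'I_n, forall j : 'I_n, bidistinct (z i) (z j)].

(* An input fails EB exactly when (z i).1 = (z j).2 for some indices i, j.
   For fixed i, j this equation determines the coordinate (z j).2 from the
   rest of z, so refilling that coordinate injects clash i j * D into all
   inputs: the failures for (i, j) have density at most 1/|D|.  A union bound
   over the n^2 pairs bounds the failure density by n^2/|D| <= 1/2, and
   1/2 >= 1/e. *)
From mathcomp Require Import all_boot all_order all_algebra.
From mathcomp Require Import all_classical all_reals all_analysis.
From mathcomp Require Import zify.
Import Order.TTheory GRing.Theory Num.Theory.
Local Open Scope ring_scope.

Lemma card_bigcup_le {I T : finType} (F : I -> {set T}) :
  (#|\bigcup_i F i| <= \sum_i #|F i|)%N.
Proof.
elim/big_ind2: _ => [|m A k B lemA lekB|//]; first by rewrite cards0.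
by rewrite (leq_trans (leq_card_setU _ _)) // leq_add.
Qed.

Section Counting.
Variables (D : finType) (n : nat).
Local Notation T := {ffun 'I_n -> D * D}.

Definition clash (i j : 'I_n) : {set T} := [set z : T | (z i).1 == (z j).2].

Definition set_snd (j : 'I_n) (zc : T * D) : T :=
  [ffun k => if k == j then ((zc.1 k).1, zc.2) else zc.1 k].

Definition restore_snd (i j : 'I_n) (w : T) : T * D :=
  ([ffun k => if k == j then ((w k).1, (w i).1) else w k], (w j).2).

Lemma set_sndK_in (i j : 'I_n) :
  {in finset.setX (clash i j) [set: D], cancel (set_snd j) (restore_snd i j)}.
Proof.
move=> [z c] /finset.setXP[/= + _]; rewrite inE => /eqP zij.
congr pair; last by rewrite /set_snd ffunE eqxx.
apply/ffunP => k; rewrite !ffunE /=.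
case: eqP => [-> | //].
have -> : (if i == j then ((z i).1, c) else z i).1 = (z i).1 by case: (i == j).
by rewrite zij /= -surjective_pairing.
Qed.

Lemma card_clash_mul (i j : 'I_n) : (#|clash i j| * #|D| <= #|T|)%N.
Proof.
rewrite -[#|D|]cardsT -cardsX.
exact/leq_card_in/(can_in_inj (@set_sndK_in i j)).
Qed.

Lemma notEB_sub_clash :
  ~: [set z : T | EB z] \subset \bigcup_(p : 'I_n * 'I_n) clash p.1 p.2.
Proof.
apply/fintype.subsetP => z; rewrite !inE => /forallPn[i] /forallPn[j].
rewrite negb_and !negbK => /orP[] /eqP zij; apply/finset.bigcupP.
  by exists (i, j); rewrite // inE zij.
by exists (j, i); rewrite // inE zij.
Qed.

Lemma card_notEB_mul :
  (#|~: [set z : T | EB z]| * #|D| <= n ^ 2 * #|T|)%N.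
Proof.
apply: leq_trans (leq_mul (subset_leq_card notEB_sub_clash) (leqnn _)) _.
apply: (leq_trans (leq_mul (card_bigcup_le (fun p => clash p.1 p.2)) (leqnn _))).
rewrite big_distrl /=.
apply: leq_trans; first by apply: leq_sum => p _; exact: card_clash_mul.
by rewrite sum_nat_const card_prod card_ord.
Qed.

Lemma card_EB_half :
  (2 * n ^ 2 <= #|D|)%N -> (#|T| <= 2 * #|[set z : T | EB z]|)%N.
Proof.
move=> Dge; rewrite -(cardsC [set z : T | EB z]).
have [n0 | n_gt0] := posnP n.
  suff -> : [set z : T | EB z] = [set: T] by rewrite finset.setCT cards0; lia.
  apply/setP => z; rewrite !inE; apply/forallP => i.
  by have := ltn_ord i; lia.
have bad := card_notEB_mul.
have sq_gt0 : (0 < n ^ 2)%N by rewrite expn_gt0 n_gt0.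
have : (n ^ 2 * (2 * #|~: [set z : T | EB z]|) <= n ^ 2 * #|T|)%N.
  by apply: leq_trans bad; move: Dge; nia.
by rewrite leq_pmul2l // -(cardsC [set z : T | EB z]); lia.
Qed.

Lemma card_ffun_gt0 : (2 * n ^ 2 <= #|D|)%N -> (0 < #|T|)%N.
Proof.
move=> Dge; rewrite card_ffun card_ord card_prod expn_gt0 muln_gt0 andbb.
case: (posnP n) => [// | n_gt0]; move: Dge; nia.
Qed.

End Counting.

Lemma invr_expR1_le_half (R : realType) : (expR (1 : R))^-1 <= 2^-1.
Proof.
rewrite lef_pV2 ?posrE ?expR_gt0 //.
by have := expR_ge1Dx (1 : R); rewrite [1 + 1]/(2%:R).
Qed.

Theorem lemma9 (R : realType) (D : finType) (n : nat) :
  (2 * n ^ 2 <= #|D|)%N ->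
  (#|[set z : {ffun 'I_n -> D * D} | EB z]|%:R
     / #|{ffun 'I_n -> D * D}|%:R : R) >= (expR (1 : R))^-1.
Proof.
move=> Dge; apply: le_trans (invr_expR1_le_half R) _.
rewrite ler_pdivlMr ?ltr0n ?card_ffun_gt0 // mulrC ler_pdivrMr ?ltr0n //.
by rewrite mulrC -natrM ler_nat; exact: card_EB_half.
Qed.
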